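(* Let $T$ be a ranked monad. Then trace equivalence is an $\mathcal{O}(\mathrm{LB}_0T)$-valued equivalence relation on $T1$: for all $m_1,m_2,m_3\in T1$, $$[\![m_1\sim m_1]\!]=\top,\qquad[\![m_1\sim m_2]\!]\le[\![m_2\sim m_1]\!],\qquad[\![m_1\sim m_2]\!]\wedge[\![m_2\sim m_3]\!]\le[\![m_1\sim m_3]\!].$$ Consequently, for every complemented open $u$ of $\mathrm{LB}_0T$, the relation $\sim_u$ is an equivalence relation on $T1$.
   Context: Monads on $\mathbf{Set}$: sets $TA$, $\mathrm{return}$, $\mathbin{\gg\!=}\colon TA\times(TB)^A\to TB$ with monad laws; $t\gg s:=t\mathbin{\gg\!=}\lambda a.s$; ranked of rank $\kappa$ (regular): every $t\in TA$ is $t'\mathbin{\gg\!=}\lambda i.\mathrm{return}\,f(i)$ with $t'\in TI$, $|I|<\kappa$. $1=\{*\}$, $2=\{0,1\}$. $\mathrm{LB}_0T$: the locale whose frame is presented by generators $[b]$ ($b\in T2$) with relations $[t\mapsto a]\wedge[t\mapsto a']=\bot$ ($a\ne a'$), $[t\gg\mathrm{return}\,a\mapsto a]=\top$, $[t\mathbin{\gg\!=}u\mapsto b]=\bigvee_a[t\mapsto a]\wedge[t\gg u(a)\mapsto b]$ for all $t\in TA$, $u\colon A\to TB$, $b\in B$, where $[t\mapsto a]:=[t\mathbin{\gg\!=}\lambda a'.\mathrm{return}(\delta_a(a'))]$, $\delta_a(a')=1$ iff $a'=a$. Trace equivalence: $[\![m\sim_1m']\!]=\bigvee\{[t\mapsto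 a]:A$ a set with $|A|\le\kappa$, $t\in TA$, $u,u'\colon A\to T1$, $a\in A$, $u(a)=u'(a)$, $m=t\mathbin{\gg\!=}u$, $m'=t\mathbin{\gg\!=}u'\}$; for $k\ge2$, $[\![m_1\sim_km_k]\!]=\bigvee\{\bigwedge_{i=1}^{k-1}[\![m_i\sim_1m_{i+1}]\!]:m_2,\ldots,m_{k-1}\in T1\}$; $[\![m\sim m']\!]=\bigvee_{k\ge1}[\![m\sim_km']\!]$. For a complemented open $u$, $m\sim_um'$ iff $u\le[\![m\sim m']\!]$. *)

From Stdlib Require Import List ClassicalEpsilon.
Import ListNotations.

Record Monad := {
  T : Type -> Type;
  ret : forall A : Type, A -> T A;
  bind : forall A B : Type, T A -> (A -> T B) -> T B;
  bind_ret_l : forall A B (a : A) (f : A -> T B), bind A B (ret A a) f = f a;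
  bind_ret_r : forall A (t : T A), bind A A t (ret A) = t;
  bind_assoc : forall A B C (t : T A) (f : A -> T B) (g : B -> T C),
      bind B C (bind A B t f) g = bind A C t (fun a => bind B C (f a) g)
}.

Definition seqM (M : Monad) (A B : Type) (t : T M A) (s : T M B) : T M B :=
  bind M A B t (fun _ => s).

(** * Cardinals: a cardinal kappa is represented by a type K of size kappa *)
Definition injective {A B : Type} (f : A -> B) := forall x y, f x = f y -> x = y.
Definition card_le (A K : Type) : Prop := exists f : A -> K, injective f.
Definition card_lt (A K : Type) : Prop := card_le A K /\ ~ card_le K A.

Definition regular (K : Type) : Prop :=
  card_le nat K /\
  forall (I : Type) (X : I -> Type),
    card_lt I K -> (forall i, card_lt (X i) K) -> card_lt {i : I & X i} K.

Definition ranked (M : Monad) (K : Type) : Prop :=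
  forall (A : Type) (t : T M A), exists (I : Type) (t' : T M I) (f : I -> A),
    card_lt I K /\ t = bind M I A t' (fun i => ret M A (f i)).

(** delta_a(a') = 1 iff a' = a  (1 = true, 0 = false) *)
Definition delta {A : Type} (a a' : A) : bool :=
  if excluded_middle_informative (a' = a) then true else false.

(** the generator [t |-> a] is [t >>= \a'. return (delta_a a')] in T2 *)
Definition mt (M : Monad) (A : Type) (t : T M A) (a : A) : T M bool :=
  bind M A bool t (fun a' => ret M bool (delta a a')).

(** * The frame O(LB_0 T), presented by generators T2 and relations.
    Construction: the free frame on generators G = T2 is the frame of
    downsets of the free meet-semilattice (finite sets of generators, here
    lists, ordered by reverse inclusion; meet = concatenation).  The presented
    frame is the frame of downsets D that are saturated for the relations
    (l <= r is respected by D iff for all F, F /\ r <= D implies F /\ l <= D). *)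

Definition FF (M : Monad) := list (T M bool) -> Prop.

Definition gen_dn (M : Monad) (b : T M bool) : FF M := fun F => In b F.

(** the defining equations l = r, with both sides evaluated in the free frame *)
Inductive presEq (M : Monad) : FF M -> FF M -> Prop :=
| eq_disj : forall (A : Type) (t : T M A) (a a' : A), a <> a' ->
    presEq M (fun F => In (mt M A t a) F /\ In (mt M A t a') F) (fun _ => False)
| eq_ret : forall (A C : Type) (t : T M C) (a : A),
    presEq M (gen_dn M (mt M A (seqM M C A t (ret M A a)) a)) (fun _ => True)
| eq_bind : forall (A B : Type) (t : T M A) (u : A -> T M B) (b : B),
    presEq M (gen_dn M (mt M B (bind M A B t u) b))
             (fun F => exists a : A, In (mt M A t a) F /\
                                     In (mt M B (seqM M A B t (u a)) b) F).

Definition downset (M : Monad) (D : FF M) : Prop :=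
  forall F F', (forall x, In x F' -> In x F) -> D F' -> D F.

Definition respects (M : Monad) (D : FF M) (l r : FF M) : Prop :=
  forall F, (forall H, r H -> D (F ++ H)) -> forall H, l H -> D (F ++ H).

Definition isO (M : Monad) (D : FF M) : Prop :=
  downset M D /\
  forall l r, presEq M l r -> respects M D l r /\ respects M D r l.

Definition leO (M : Monad) (D E : FF M) : Prop := forall F, D F -> E F.
Definition eqO (M : Monad) (D E : FF M) : Prop := leO M D E /\ leO M E D.
Definition topO (M : Monad) : FF M := fun _ => True.
Definition meetO (M : Monad) (D E : FF M) : FF M := fun F => D F /\ E F.
Definition closureO (M : Monad) (X : FF M) : FF M :=
  fun F => forall E, isO M E -> leO M X E -> E F.
Definition joinO (M : Monad) (S : FF M -> Prop) : FF M :=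
  closureO M (fun F => exists D, S D /\ D F).
Definition botO (M : Monad) : FF M := joinO M (fun _ => False).

Definition genO (M : Monad) (b : T M bool) : FF M := closureO M (gen_dn M b).
Definition mapsto (M : Monad) (A : Type) (t : T M A) (a : A) : FF M :=
  genO M (mt M A t a).

Definition sim1 (M : Monad) (K : Type) (m m' : T M unit) : FF M :=
  joinO M (fun D => exists (A : Type) (t : T M A) (u u' : A -> T M unit) (a : A),
    card_le A K /\ u a = u' a /\ m = bind M A unit t u /\
    m' = bind M A unit t u' /\ D = mapsto M A t a).

Fixpoint chain (M : Monad) (K : Type) (m : T M unit) (l : list (T M unit)) : FF M :=
  match l with
  | [] => topO M
  | m' :: r => meetO M (sim1 M K m m') (chain M K m' r)
  end.

Definition simk (M : Monad) (K : Type) (k : nat) (m m' : T M unit) : FF M :=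
  match k with
  | 0 => botO M (* unused *)
  | 1 => sim1 M K m m'
  | S (S j) => joinO M (fun D => exists mid : list (T M unit),
                 length mid = j /\ D = chain M K m (mid ++ [m']))
  end.

Definition sim (M : Monad) (K : Type) (m m' : T M unit) : FF M :=
  joinO M (fun D => exists k, 1 <= k /\ D = simk M K k m m').

Definition complemented (M : Monad) (u : FF M) : Prop :=
  isO M u /\ exists v, isO M v /\ eqO M (meetO M u v) (botO M) /\
    eqO M (joinO M (fun D => D = u \/ D = v)) (topO M).

Definition simu (M : Monad) (K : Type) (u : FF M) (m m' : T M unit) : Prop :=
  leO M u (sim M K m m').

(* [[m ~ m']] is the join of all chains [[m ~1 m_2]] /\ ... /\ [[m_k ~1 m']]
   with an arbitrary list of intermediate points.  Reflexivity holds because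
   [return * |-> *] = top, and symmetry because ~1 is symmetric, so chains can
   be reversed.  For transitivity, frame distributivity turns the meet of two
   such joins into the join of the meets of pairs of chains, and a meet of two
   chains meeting at m_2 is again a chain.  The relations ~_u are then
   equivalence relations for every open u. *)
From Stdlib Require Import List Lia.
Import ListNotations.

Section Frame.

Variable M : Monad.

Lemma leO_trans (D E G : FF M) : leO M D E -> leO M E G -> leO M D G.
Proof. unfold leO; auto. Qed.

Lemma closureO_isO (X : FF M) : isO M (closureO M X).
Proof.
  split.
  - intros F F' Hincl HF E [Edown Eresp] HXE.
    apply (Edown F F' Hincl), HF; [split|]; auto.
  - intros l r Hpres; split; intros F Hr H Hl E [Edown Eresp] HXE.
    + apply (proj1 (Eresp l r Hpres) F); auto.
      intros H' Hr'; apply (Hr H' Hr'); [split|]; auto.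
    + apply (proj2 (Eresp l r Hpres) F); auto.
      intros H' Hr'; apply (Hr H' Hr'); [split|]; auto.
Qed.

Lemma closureO_least (X E : FF M) : isO M E -> leO M X E -> leO M (closureO M X) E.
Proof. intros HE HXE F HF; apply HF; auto. Qed.

Lemma joinO_least (S : FF M -> Prop) (E : FF M) :
  isO M E -> (forall D, S D -> leO M D E) -> leO M (joinO M S) E.
Proof.
  intros HE HSE; apply closureO_least; auto.
  intros F [D [HD HF]]; exact (HSE D HD F HF).
Qed.

Lemma joinO_upper (S : FF M -> Prop) (D : FF M) : S D -> leO M D (joinO M S).
Proof. intros HD F HF E _ HXE; apply HXE; exists D; auto. Qed.

Lemma joinO_mono (S S' : FF M -> Prop) :
  (forall D, S D -> S' D) -> leO M (joinO M S) (joinO M S').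
Proof.
  intros HSS'; apply joinO_least; [apply closureO_isO|].
  intros D HD; apply joinO_upper; auto.
Qed.

Lemma topO_isO : isO M (topO M).
Proof. split; [|split]; intros ? ? ? ?; exact I. Qed.

Lemma meetO_isO (D E : FF M) : isO M D -> isO M E -> isO M (meetO M D E).
Proof.
  intros [Ddown Dresp] [Edown Eresp]; split.
  - intros F F' Hincl [HD HE]; split; eauto.
  - intros l r Hpres; split; intros F Hr H Hl; split.
    + apply (proj1 (Dresp l r Hpres) F); auto; intros H' Hr'; apply (Hr H' Hr').
    + apply (proj1 (Eresp l r Hpres) F); auto; intros H' Hr'; apply (Hr H' Hr').
    + apply (proj2 (Dresp l r Hpres) F); auto; intros H' Hr'; apply (Hr H' Hr').
    + apply (proj2 (Eresp l r Hpres) F); auto; intros H' Hr'; apply (Hr H' Hr').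
Qed.

(* Heyting implication; concatenation of generator lists is their meet. *)
Definition impO (X E : FF M) : FF M := fun F => forall G, X G -> E (F ++ G).

Lemma impO_isO (X E : FF M) : isO M E -> isO M (impO X E).
Proof.
  assert (Hswap : forall F G H (x : T M bool),
             In x ((F ++ G) ++ H) -> In x ((F ++ H) ++ G)).
  { intros F G H x; rewrite !in_app_iff; tauto. }
  intros [Edown Eresp]; split.
  - intros F F' HF'F HE G HG; apply (Edown _ (F' ++ G)); auto.
    intros x; rewrite !in_app_iff; firstorder.
  - intros l r Hpres; split; intros F Hr H Hl G HG;
      apply (Edown _ ((F ++ G) ++ H)); auto.
    + apply (proj1 (Eresp l r Hpres)); auto.
      intros H' Hr'; apply (Edown _ ((F ++ H') ++ G)); auto; apply Hr; auto.
    + apply (proj2 (Eresp l r Hpres)); auto.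
      intros H' Hr'; apply (Edown _ ((F ++ H') ++ G)); auto; apply Hr; auto.
Qed.

Lemma leO_impO (X Y E : FF M) :
  downset M X -> downset M Y -> downset M E ->
  leO M (meetO M X Y) E <-> leO M X (impO Y E).
Proof.
  intros Xdown Ydown Edown; split.
  - intros HXYE F HX G HY; apply HXYE; split.
    + apply (Xdown _ F); auto; intros x; rewrite in_app_iff; auto.
    + apply (Ydown _ G); auto; intros x; rewrite in_app_iff; auto.
  - intros HXE F [HX HY]; apply (Edown _ (F ++ F)), HXE; auto.
    intros x; rewrite in_app_iff; tauto.
Qed.

Lemma meetO_joinO_distr (S S' : FF M -> Prop) :
  (forall D, S D -> isO M D) -> (forall D, S' D -> isO M D) ->
  leO M (meetO M (joinO M S) (joinO M S'))
    (joinO M (fun D => exists A B, S A /\ S' B /\ D = meetO M A B)).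
Proof.
  intros HS HS'.
  set (E := joinO M (fun D => exists A B, S A /\ S' B /\ D = meetO M A B)).
  assert (Edown : downset M E) by apply closureO_isO.
  assert (Eimp : forall X, isO M (impO X E)) by (intros; apply impO_isO, closureO_isO).
  assert (joinO_down : forall S0, downset M (joinO M S0)) by (intros; apply closureO_isO).
  assert (HmeetA : forall A, S A -> leO M (meetO M (joinO M S') A) E).
  { intros A HA; apply (leO_impO _ _ _ (joinO_down S') (proj1 (HS A HA)) Edown).
    apply joinO_least; [apply Eimp|].
    intros B HB; apply (leO_impO _ _ _ (proj1 (HS' B HB)) (proj1 (HS A HA)) Edown).
    intros F [HBF HAF]; apply (joinO_upper _ (meetO M A B)); [exists A, B|split]; auto. }
  apply (leO_impO _ _ _ (joinO_down S) (joinO_down S') Edown).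
  apply joinO_least; [apply Eimp|].
  intros A HA; apply (leO_impO _ _ _ (proj1 (HS A HA)) (joinO_down S') Edown).
  intros F [HAF HF]; apply (HmeetA A HA); split; auto.
Qed.

Lemma genO_top (b : T M bool) :
  presEq M (gen_dn M b) (topO M) -> leO M (topO M) (genO M b).
Proof.
  intros Hpres F _ E [Edown Eresp] HbE.
  rewrite <- (app_nil_r F); apply (proj2 (Eresp _ _ Hpres) F); [|exact I].
  intros H Hb; apply (Edown _ H), HbE; auto.
  intros x; rewrite in_app_iff; auto.
Qed.

Lemma mapsto_ret_top (A : Type) (a : A) :
  leO M (topO M) (mapsto M A (ret M A a) a).
Proof.
  apply genO_top.
  pose proof (eq_ret M A A (ret M A a) a) as Hret.
  unfold seqM in Hret; rewrite bind_ret_l in Hret; exact Hret.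
Qed.

End Frame.

Lemma card_le_unit (K : Type) : card_le nat K -> card_le unit K.
Proof. intros [f _]; exists (fun _ => f 0); intros [] [] _; reflexivity. Qed.

Section TraceEquivalence.

Variables (M : Monad) (K : Type).

Lemma sim1_refl (m : T M unit) : card_le unit K -> leO M (topO M) (sim1 M K m m).
Proof.
  intros HK; eapply leO_trans; [apply (mapsto_ret_top M unit tt)|].
  apply joinO_upper.
  exists unit, (ret M unit tt), (fun _ => m), (fun _ => m), tt.
  rewrite bind_ret_l; repeat split; auto.
Qed.

Lemma sim1_sym (m m' : T M unit) : leO M (sim1 M K m m') (sim1 M K m' m).
Proof.
  apply joinO_mono; intros D (A & t & u & u' & a & HA & Hu & Hm & Hm' & HD).
  exists A, t, u', u, a; repeat split; auto.
Qed.

Lemma chain_isO (m : T M unit) (l : list (T M unit)) : isO M (chain M K m l).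
Proof.
  revert m; induction l as [|m' l IH]; intros m; simpl.
  - apply topO_isO.
  - apply meetO_isO; [apply closureO_isO|apply IH].
Qed.

Lemma chain_app (l1 l2 : list (T M unit)) (m m2 : T M unit) (F : list (T M bool)) :
  chain M K m (l1 ++ m2 :: l2) F <-> chain M K m (l1 ++ [m2]) F /\ chain M K m2 l2 F.
Proof.
  revert m; induction l1 as [|m1 l1 IH]; intros m; simpl; unfold meetO, topO.
  - tauto.
  - rewrite IH; tauto.
Qed.

Lemma chain_rev (l : list (T M unit)) (m m' : T M unit) :
  leO M (chain M K m (l ++ [m'])) (chain M K m' (rev l ++ [m])).
Proof.
  revert m; induction l as [|m1 l IH]; intros m F; simpl; unfold meetO, topO.
  - intros [Hsim _]; split; [apply sim1_sym|]; auto.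
  - intros [Hsim Hchain]; rewrite <- app_assoc; apply chain_app.
    split; [apply IH; auto|simpl; unfold meetO, topO].
    split; [apply sim1_sym|]; auto.
Qed.

(* The case k = 1 of [sim] is [mid = []]. *)
Definition sim_chains (m m' : T M unit) : FF M :=
  joinO M (fun D => exists mid, D = chain M K m (mid ++ [m'])).

Lemma sim_le_sim_chains (m m' : T M unit) : leO M (sim M K m m') (sim_chains m m').
Proof.
  apply joinO_least; [apply closureO_isO|].
  intros D (k & Hk & ->); destruct k as [|[|j]]; [lia| |].
  - intros F HF; apply (joinO_upper M _ (chain M K m ([] ++ [m']))).
    + exists []; reflexivity.
    + split; [exact HF|exact I].
  - apply joinO_least; [apply closureO_isO|].
    intros D (mid & _ & ->); apply joinO_upper; exists mid; reflexivity.
Qed.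

Lemma sim_chains_le_sim (m m' : T M unit) : leO M (sim_chains m m') (sim M K m m').
Proof.
  apply joinO_least; [apply closureO_isO|].
  intros D [mid ->].
  apply leO_trans with (simk M K (S (S (length mid))) m m').
  - apply joinO_upper; exists mid; split; reflexivity.
  - apply joinO_upper; exists (S (S (length mid))); split; [lia|reflexivity].
Qed.

Lemma sim_refl (m : T M unit) : card_le unit K -> leO M (topO M) (sim M K m m).
Proof.
  intros HK; eapply leO_trans; [|apply sim_chains_le_sim].
  intros F HF; apply (joinO_upper M _ (chain M K m ([] ++ [m]))).
  - exists []; reflexivity.
  - split; [apply sim1_refl|]; auto.
Qed.

Lemma sim_sym (m m' : T M unit) : leO M (sim M K m m') (sim M K m' m).
Proof.
  eapply leO_trans; [apply sim_le_sim_chains|].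
  eapply leO_trans; [|apply sim_chains_le_sim].
  apply joinO_least; [apply closureO_isO|].
  intros D [mid ->]; eapply leO_trans; [apply chain_rev|].
  apply joinO_upper; exists (rev mid); reflexivity.
Qed.

Lemma sim_trans (m1 m2 m3 : T M unit) :
  leO M (meetO M (sim M K m1 m2) (sim M K m2 m3)) (sim M K m1 m3).
Proof.
  apply leO_trans with (meetO M (sim_chains m1 m2) (sim_chains m2 m3)).
  { intros F [H12 H23]; split; apply sim_le_sim_chains; auto. }
  eapply leO_trans; [apply meetO_joinO_distr|].
  1, 2: intros D [mid ->]; apply chain_isO.
  eapply leO_trans; [|apply sim_chains_le_sim].
  apply joinO_least; [apply closureO_isO|].
  intros D (A & B & [mid1 ->] & [mid2 ->] & ->) F [H12 H23].
  apply (joinO_upper M _ (chain M K m1 ((mid1 ++ m2 :: mid2) ++ [m3]))).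
  - exists (mid1 ++ m2 :: mid2); reflexivity.
  - rewrite <- app_assoc; apply chain_app; auto.
Qed.

End TraceEquivalence.

Theorem lemma3p9 (M : Monad) (K : Type) (HK : regular K) (HT : ranked M K) :
  (forall m1 m2 m3 : T M unit,
      eqO M (sim M K m1 m1) (topO M) /\
      leO M (sim M K m1 m2) (sim M K m2 m1) /\
      leO M (meetO M (sim M K m1 m2) (sim M K m2 m3)) (sim M K m1 m3)) /\
  (forall u : FF M, complemented M u ->
      (forall m : T M unit, simu M K u m m) /\
      (forall m m' : T M unit, simu M K u m m' -> simu M K u m' m) /\
      (forall m1 m2 m3 : T M unit,
          simu M K u m1 m2 -> simu M K u m2 m3 -> simu M K u m1 m3)).
Proof.
  assert (Hunit : card_le unit K) by (apply card_le_unit, HK).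
  split.
  - intros m1 m2 m3; split; [split|split].
    + intros F _; exact I.
    + apply sim_refl; auto.
    + apply sim_sym.
    + apply sim_trans.
  - intros u _; unfold simu; split; [|split].
    + intros m F _; apply sim_refl; auto; exact I.
    + intros m m' Hu; eapply leO_trans; [apply Hu|apply sim_sym].
    + intros m1 m2 m3 H12 H23 F HF; apply (sim_trans M K m1 m2 m3); split; auto.
Qed.
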